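(* Let $n\ge2$, $p\ge1$, $B\ge1$, $k\in\{1,\dots,p\}$, and consider $\hat S^{\mathrm{CPSS}}_{n,\tau}$ and $p_{k,\lfloor n/2\rfloor}$ as described in the context. (i) If $\tau\in(\frac12,1]$, then $\mathbb{P}(k\in\hat S^{\mathrm{CPSS}}_{n,\tau})\le\frac{1}{2\tau-1}p_{k,\lfloor n/2\rfloor}^2$. (ii) If $\tau\in[0,\frac12)$, then $\mathbb{P}(k\notin\hat S^{\mathrm{CPSS}}_{n,\tau})\le\frac{1}{1-2\tau}(1-p_{k,\lfloor n/2\rfloor})^2$.
   Context: Let $Z_1,\dots,Z_n$ be i.i.d. random elements. A variable selection procedure is a family of statistics $\hat S_m=\hat S_m(Z_1,\dots,Z_m)$, $m\ge1$, taking values in the subsets of $\{1,\dots,p\}$. For $A=\{i_1<\dots<i_{|A|}\}\subseteq\{1,\dots,n\}$ write $\hat S(A):=\hat S_{|A|}(Z_{i_1},\dots,Z_{i_{|A|}})$, and let $p_{k,m}:=\mathbb{P}(k\in\hat S_m(Z_1,\dots,Z_m))$. Let $\{(A_{2j-1},A_{2j}):j=1,\dots,B\}$ be randomly chosen pairs of subsets of $\{1,\dots,n\}$ of size $\lfloor n/2\rfloor$ with $A_{2j-1}\cap A_{2j}=\emptyset$, the pairs independent of each other and of the data. Define $\hat\Pi_B(k):=\frac1{2B}\sum_{j=1}^{2B}\mathbb{1}_{\{k\in\hat S(A_j)\}}$ and $\hat S^{\mathrm{CPSS}}_{n,\tau}:=\{k:\hat\Pi_B(k)\ge\tau\}$.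 *)

From HB Require Import structures.
From mathcomp Require Import all_boot all_order all_algebra.
From mathcomp Require Import all_classical all_reals all_analysis.
Set Implicit Arguments. Unset Strict Implicit. Unset Printing Implicit Defensive.
Import Order.TTheory GRing.Theory Num.Theory.
Local Open Scope classical_set_scope.
Local Open Scope ring_scope.

Definition cylinders (I : Type) d (T : measurableType d) : set (set (I -> T)) :=
  [set C | exists i (B : set T), measurable B /\ C = (fun f => f i) @^-1` B].

Definition prod_measurable (I : Type) d (T : measurableType d) (D : set (I -> T)) :
  Prop := <<s @cylinders I d T >> D.

(* A variable selection procedure: S m maps a sample of size m,
   (Z_1,...,Z_m) represented as a function 'I_m -> T, to a subset of
   {1..p} (represented 0-based as {set 'I_p}). *)
Definition selection d (T : measurableType d) (p : nat) :=
  forall m : nat, ('I_m -> T) -> {set 'I_p}.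

(* S_hat(A) = S_{|A|}(Z_{i_1},...,Z_{i_{|A|}}) with i_1 < ... < i_{|A|}
   (enum_val enumerates A in increasing order). *)
Definition S_hat d (T : measurableType d) (Omega : Type) (p n : nat)
  (S : selection T p) (Z : nat -> Omega -> T) (A : {set 'I_n}) (w : Omega)
  : {set 'I_p} :=
  S #|A| (fun j : 'I_#|A| => Z (nat_of_ord (enum_val j)) w).

Definition p_km d (T : measurableType d) d0 (Omega : measurableType d0)
  (R : realType) (P : probability Omega R) (p : nat) (S : selection T p)
  (Z : nat -> Omega -> T) (k : 'I_p) (m : nat) : R :=
  fine (P [set w | k \in S m (fun i : 'I_m => Z (nat_of_ord i) w)]).

(* Pi_hat_B(k) = (1/(2B)) sum_{j=1}^{2B} 1{k \in S_hat(A_j)}, where the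
   j-th pair (A_{2j-1}, A_{2j}) is Apair j. *)
Definition Pi_hat d (T : measurableType d) (Omega : Type) (R : realType)
  (p n B : nat) (S : selection T p) (Z : nat -> Omega -> T)
  (Apair : 'I_B -> Omega -> {set 'I_n} * {set 'I_n}) (k : 'I_p) (w : Omega) : R :=
  (2 * B%:R)^-1 * \sum_(j < B)
     (((k \in S_hat S Z (Apair j w).1 w) : nat)%:R
      + ((k \in S_hat S Z (Apair j w).2 w) : nat)%:R).

Definition S_cpss d (T : measurableType d) (Omega : Type) (R : realType)
  (p n B : nat) (S : selection T p) (Z : nat -> Omega -> T)
  (Apair : 'I_B -> Omega -> {set 'I_n} * {set 'I_n}) (tau : R) (w : Omega)
  : {set 'I_p} :=
  [set k | tau <= Pi_hat R S Z Apair k w].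

From HB Require Import structures.
From mathcomp Require Import all_boot all_order all_algebra.
From mathcomp Require Import all_classical all_reals all_analysis.
From mathcomp Require Import measurable_realfun lra.
Set Implicit Arguments. Unset Strict Implicit. Unset Printing Implicit Defensive.
Import Order.TTheory GRing.Theory Num.Theory.
Local Open Scope classical_set_scope.
Local Open Scope ring_scope.

(* Fix k and, for the j-th pair, let W_j be the event that the selections on
   both halves A_{2j-1}, A_{2j} contain k.  For bits x, y we have
   x + y <= 1 + x y, so Pi_hat(k) >= tau forces at least (2 tau - 1) B of the
   events W_j to occur, and Markov's inequality bounds P(k in S^CPSS) by
   (sum_j P(W_j)) / ((2 tau - 1) B).  Conditionally on the pair being (a, a'),
   which is independent of the data, the two selections are functions of the
   disjoint subsamples Z_a and Z_a' of i.i.d. data: they are independent and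
   each contains k with probability p_{k, n/2}, so P(W_j) = p_{k, n/2}^2.
   Part (ii) is the same argument for non-selection, based on
   1 <= x + y + (1 - x)(1 - y). *)

Lemma bits_add_le (R : realDomainType) (x y : bool) :
  (x : nat)%:R + (y : nat)%:R <= 1 + (x && y : nat)%:R :> R.
Proof. by case: x; case: y => /=; rewrite ?mulr1n ?mulr0n; lra. Qed.

Lemma bits_add_ge (R : realDomainType) (x y : bool) :
  1 <= (x : nat)%:R + (y : nat)%:R + (~~ x && ~~ y : nat)%:R :> R.
Proof. by case: x; case: y => /=; rewrite ?mulr1n ?mulr0n; lra. Qed.

Lemma leq_half n : (n./2 <= n)%N.
Proof. by rewrite -divn2 leq_div. Qed.

Lemma indic_setE (T : Type) (R : pzRingType) (b : pred T) (x : T) :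
  \1_[set y | b y] x = (b x)%:R :> R.
Proof. by rewrite indicE mem_setE. Qed.

Lemma trivIset_preimage (aT rT : Type) (f : aT -> rT) (F : (set rT)^nat) :
  trivIset setT F -> trivIset setT (fun i => f @^-1` F i).
Proof.
move=> /trivIsetP tF; apply/trivIsetP => i j _ _ ij.
by rewrite -preimage_setI tF // preimage_set0.
Qed.

Lemma markov_count d (Omega : measurableType d) (R : realType)
    (mu : {measure set Omega -> \bar R}) (B : nat) (W : 'I_B -> set Omega)
    (C : set Omega) (c : R) :
  (forall j, measurable (W j)) -> measurable C -> 0 <= c ->
  (forall w, C w -> c <= \sum_(j < B) \1_(W j) w) ->
  (c%:E * mu C <= \sum_(j < B) mu (W j))%E.
Proof.
move=> mW mC c0 cW.
have mind (A : set Omega) : measurable A ->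
    measurable_fun setT (fun x => (\1_A x : R)%:E).
  by move=> mA; apply/measurable_EFinP; exact: measurable_indic.
have -> : mu C = (\int[mu]_x (\1_C x)%:E)%E by rewrite integral_indic // setIT.
have -> : (\sum_(j < B) mu (W j) = \int[mu]_x \sum_(j < B) (\1_(W j) x)%:E)%E.
  rewrite ge0_integral_sum //.
  - by apply: eq_bigr => j _; rewrite integral_indic // setIT.
  - by move=> j; exact: mind.
rewrite -ge0_integralZl //; last exact: mind.
apply: ge0_le_integral => //.
- by move=> x _; rewrite mule_ge0 // lee_fin.
- exact/measurable_funeM/mind.
- by apply: emeasurable_sum => j; exact: mind.
- move=> x _; rewrite sumEFin -EFinM lee_fin indicE.
  case: (boolP (x \in C)) => [/set_mem /cW|_]; first by rewrite mulr1.
  by rewrite mulr0; apply: sumr_ge0.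
Qed.

Definition boxes d (T : measurableType d) (m : nat) : set (set ('I_m -> T)) :=
  [set X | exists B : 'I_m -> set T, (forall i, measurable (B i)) /\
     X = [set f | forall i, B i (f i)]].

Arguments boxes {d} T m.

Local Notation box_sigma T m := (g_sigma_algebraType (boxes T m)).

Lemma boxes_setI_closed d (T : measurableType d) m : setI_closed (boxes T m).
Proof.
move=> _ _ [B1 [mB1 ->]] [B2 [mB2 ->]]; exists (fun i => B1 i `&` B2 i).
split; first by move=> i; exact: measurableI.
by apply/seteqP; split=> f /=; [move=> [f1 f2] i | move=> f12; split=> i;
  case: (f12 i)].
Qed.

Lemma box_sigma_box d (T : measurableType d) m (B : 'I_m -> set T) :
  (forall j, measurable (B j)) -> <<s boxes T m>> [set f | forall j, B j (f j)].
Proof. by move=> mB; apply: sub_sigma_algebra; exists B. Qed.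

Lemma prod_measurable_box_sigma d (T : measurableType d) m (X : set ('I_m -> T)) :
  prod_measurable X -> <<s boxes T m>> X.
Proof.
apply: (smallest_sub (@smallest_sigma_algebra _ setT (boxes T m))).
move=> _ [i [B [mB ->]]]; apply: sub_sigma_algebra.
exists (fun j => if j == i then B else setT); split=> [j|]; first by case: eqP.
apply/seteqP; split=> f /=; first by move=> fB j; case: eqP => [->|].
by move=> /(_ i); rewrite eqxx.
Qed.

Lemma prod_measurable_reindex d (T : measurableType d) n m (g : 'I_m -> 'I_n)
    (X : set ('I_m -> T)) :
  prod_measurable X -> prod_measurable [set z : 'I_n -> T | X (fun j => z (g j))].
Proof.
pose reindex (z : 'I_n -> T) := fun j => z (g j).
have sa := sigma_algebra_image reindex
  (@smallest_sigma_algebra _ setT (@cylinders 'I_n d T)).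
move=> mX; have := smallest_sub sa _ mX; rewrite /image_set_system /= setTI.
apply => _ [i [B [mB ->]]]; rewrite /image_set_system /= setTI.
by apply: sub_sigma_algebra; exists (g i), B.
Qed.

Section iid_subsamples.
Context (R : realType) (d0 : measure_display) (Omega : measurableType d0)
  (P : probability Omega R) (d : measure_display) (T : measurableType d)
  (n : nat) (Z : nat -> Omega -> T).
Hypothesis hZmeas : forall i : 'I_n, measurable_fun setT (Z i).
Hypothesis hZind : forall Bs : 'I_n -> set T, (forall i, measurable (Bs i)) ->
  P (\bigcap_(i in [set: 'I_n]) (Z i @^-1` Bs i))
    = (\prod_(i < n) P (Z i @^-1` Bs i))%E.
Hypothesis hZid : forall (i j : 'I_n) (Bs : set T), measurable Bs ->
  P (Z i @^-1` Bs) = P (Z j @^-1` Bs).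

Definition subsample m (g : 'I_m -> 'I_n) (w : Omega) : 'I_m -> T :=
  fun j => Z (g j) w.

Lemma measurable_Z_preimage (i : 'I_n) (A : set T) :
  measurable A -> measurable (Z i @^-1` A).
Proof. by move=> mA; rewrite -[X in measurable X]setTI; exact: hZmeas. Qed.

Lemma measurable_subsample m (g : 'I_m -> 'I_n) :
  measurable_fun setT (subsample g : Omega -> box_sigma T m).
Proof.
apply: (@measurability _ _ _ (box_sigma T m) setT _ (boxes T m)) => //.
move=> _ [_ [B [mB ->]] <-].
have -> : setT `&` subsample g @^-1` [set f | forall j, B j (f j)] =
    \bigcap_(j in [set: 'I_m]) (Z (g j) @^-1` B j).
  by apply/seteqP; split=> w /= => [[_ wB] j _|wB]; [|split=> // j]; exact: wB.
apply: fin_bigcap_measurable; first exact: finite_finset.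
by move=> j _; exact: measurable_Z_preimage.
Qed.

Lemma measurable_subsample_preimage m (g : 'I_m -> 'I_n) (X : set ('I_m -> T)) :
  <<s boxes T m>> X -> measurable (subsample g @^-1` X).
Proof.
by move=> mX; rewrite -[X in measurable X]setTI; exact: measurable_subsample.
Qed.

Definition lift_box m (g : 'I_m -> 'I_n) (B : 'I_m -> set T) (i : 'I_n) : set T :=
  if [pick j | g j == i] is Some j then B j else setT.

Lemma measurable_lift_box m (g : 'I_m -> 'I_n) (B : 'I_m -> set T) i :
  (forall j, measurable (B j)) -> measurable (lift_box g B i).
Proof. by move=> mB; rewrite /lift_box; case: pickP. Qed.

Lemma lift_box_image m (g : 'I_m -> 'I_n) (B : 'I_m -> set T) j :
  injective g -> lift_box g B (g j) = B j.
Proof.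
by move=> ginj; rewrite /lift_box; case: pickP => [j' /eqP/ginj ->|/(_ j)];
  rewrite ?eqxx.
Qed.

Lemma lift_box_out m (g : 'I_m -> 'I_n) (B : 'I_m -> set T) i :
  (forall j, g j != i) -> lift_box g B i = setT.
Proof.
by move=> gi; rewrite /lift_box; case: pickP => // j; rewrite (negbTE (gi j)).
Qed.

Lemma subsample_preimage_box m (g : 'I_m -> 'I_n) (B : 'I_m -> set T) :
  injective g ->
  subsample g @^-1` [set f | forall j, B j (f j)] =
  \bigcap_(i in [set: 'I_n]) (Z i @^-1` lift_box g B i).
Proof.
move=> ginj; apply/seteqP; split=> w /= wB.
- by move=> i _; rewrite /lift_box; case: pickP => // j /eqP <-; exact: wB.
- by move=> j; have := wB (g j) I; rewrite /= lift_box_image.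
Qed.

Lemma prob_subsample_box m (g : 'I_m -> 'I_n) (B : 'I_m -> set T) :
  injective g -> (forall j, measurable (B j)) ->
  P (subsample g @^-1` [set f | forall j, B j (f j)])
    = (\prod_(j < m) P (Z (g j) @^-1` B j))%E.
Proof.
move=> ginj mB; rewrite subsample_preimage_box // hZind; last first.
  by move=> i; exact: measurable_lift_box.
rewrite (bigID (mem (g @: [set: 'I_m])%SET)) /= [X in (_ * X)%E]big1 ?mule1.
  rewrite big_imset /=; last by move=> x y _ _; exact: ginj.
  by apply: eq_big => [j|j _]; rewrite ?inE ?lift_box_image.
move=> i gi; rewrite lift_box_out ?preimage_setT ?probability_setT // => j.
by apply: contraNneq gi => <-; exact: imset_f.
Qed.

Lemma prob_subsample_eq m (g g' : 'I_m -> 'I_n) (X : set ('I_m -> T)) :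
  injective g -> injective g' -> <<s boxes T m>> X ->
  P (subsample g @^-1` X) = P (subsample g' @^-1` X).
Proof.
move=> ginj g'inj; apply: (@dynkin_induction _ (box_sigma T m) (boxes T m)
  (fun X => P (subsample g @^-1` X) = P (subsample g' @^-1` X))) => //.
- exact: boxes_setI_closed.
- move=> _ [B [mB ->]]; rewrite !prob_subsample_box //.
  by apply: eq_bigr => j _; exact: hZid.
- move=> A mA eqA /=.
  rewrite -(preimage_setC (subsample g)) -(preimage_setC (subsample g')).
  rewrite (probability_setC _ (measurable_subsample_preimage g mA)).
  by rewrite (probability_setC _ (measurable_subsample_preimage g' mA)) eqA.
- move=> F mF tF eqF /=.
  have sum_preimage (h : 'I_m -> 'I_n) : P (subsample h @^-1` \bigcup_i F i) =
      (\sum_(i <oo | i \in [set: nat]) P (subsample h @^-1` F i))%E.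
    rewrite preimage_bigcup; apply: measure_bigcup; last exact: trivIset_preimage.
    by move=> i _; exact: (measurable_subsample_preimage h (mF i)).
  rewrite !sum_preimage.
  by apply: eq_eseriesr => i _; exact: eqF.
Qed.

Lemma indep_subsample_of_boxes m (g : 'I_m -> 'I_n) (E : set Omega) :
  measurable E ->
  (forall B, (forall j, measurable (B j)) ->
     P (subsample g @^-1` [set f | forall j, B j (f j)] `&` E) =
     (P (subsample g @^-1` [set f | forall j, B j (f j)]) * P E)%E) ->
  forall X, <<s boxes T m>> X ->
  P (subsample g @^-1` X `&` E) = (P (subsample g @^-1` X) * P E)%E.
Proof.
move=> mE indepB; apply: (@dynkin_induction _ (box_sigma T m) (boxes T m)
  (fun X => P (subsample g @^-1` X `&` E) = (P (subsample g @^-1` X) * P E)%E)).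
- by [].
- exact: boxes_setI_closed.
- by rewrite /= preimage_setT setTI probability_setT mul1e.
- by move=> _ [B [mB ->]]; exact: indepB.
- move=> A mA indepA /=; have mgA := measurable_subsample_preimage g mA.
  have PD : P (E `\` subsample g @^-1` A) = (P E - P (E `&` subsample g @^-1` A))%E.
    by apply: measureD => //; rewrite ltey_eq fin_num_measure.
  rewrite -preimage_setC (probability_setC _ mgA) setIC -setDE PD setIC indepA.
  by rewrite muleBl ?mul1e ?fin_num_measure.
- move=> F mF tF indepF /=.
  have mgF i : measurable (subsample g @^-1` F i).
    exact: (measurable_subsample_preimage g (mF i)).
  have PE : P E = (fine (P E))%:E by rewrite fineK // fin_num_measure.
  have sum_gFE : P (\bigcup_i (subsample g @^-1` F i `&` E)) =
      (\sum_(i <oo | i \in [set: nat]) P (subsample g @^-1` F i `&` E))%E.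
    apply: measure_bigcup; last exact/trivIset_setIr/trivIset_preimage.
    by move=> i _; apply: measurableI.
  have sum_gF : P (\bigcup_i subsample g @^-1` F i) =
      (\sum_(i <oo | i \in [set: nat]) P (subsample g @^-1` F i))%E.
    by apply: measure_bigcup; last exact: trivIset_preimage.
  rewrite preimage_bigcup setI_bigcupl sum_gFE sum_gF.
  under eq_eseriesr do rewrite indepF PE muleC.
  rewrite nneseriesZl => [|i _]; last exact: measure_ge0.
  by rewrite muleC -PE.
Qed.

Lemma prob_disjoint_boxes m1 m2 (g1 : 'I_m1 -> 'I_n) (g2 : 'I_m2 -> 'I_n)
    (B1 : 'I_m1 -> set T) (B2 : 'I_m2 -> set T) :
  injective g1 -> injective g2 -> (forall a b, g1 a != g2 b) ->
  (forall j, measurable (B1 j)) -> (forall j, measurable (B2 j)) ->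
  P (subsample g1 @^-1` [set f | forall j, B1 j (f j)] `&`
     subsample g2 @^-1` [set f | forall j, B2 j (f j)]) =
  (P (subsample g1 @^-1` [set f | forall j, B1 j (f j)]) *
   P (subsample g2 @^-1` [set f | forall j, B2 j (f j)]))%E.
Proof.
move=> inj1 inj2 g12 mB1 mB2; rewrite !subsample_preimage_box //.
have mL1 i := measurable_lift_box g1 i mB1.
have mL2 i := measurable_lift_box g2 i mB2.
have -> : \bigcap_(i in [set: 'I_n]) Z i @^-1` lift_box g1 B1 i `&`
          \bigcap_(i in [set: 'I_n]) Z i @^-1` lift_box g2 B2 i =
    \bigcap_(i in [set: 'I_n]) Z i @^-1` (lift_box g1 B1 i `&` lift_box g2 B2 i).
  by rewrite -bigcapI; apply: eq_bigcapr => i _; rewrite preimage_setI.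
rewrite (hZind (fun i => measurableI _ _ (mL1 i) (mL2 i))).
rewrite (hZind mL1) (hZind mL2) -big_split /=; apply: eq_bigr => i _.
have [j /eqP g1j|g1_out] := pickP (fun j => g1 j == i).
  rewrite (@lift_box_out _ g2) ?setIT ?preimage_setT ?probability_setT ?mule1 //.
  by move=> j'; rewrite -g1j eq_sym.
rewrite (@lift_box_out _ g1) ?setTI ?preimage_setT ?probability_setT ?mul1e //.
by move=> j'; rewrite g1_out.
Qed.

Lemma subsample_indep m1 m2 (g1 : 'I_m1 -> 'I_n) (g2 : 'I_m2 -> 'I_n)
    (X1 : set ('I_m1 -> T)) (X2 : set ('I_m2 -> T)) :
  injective g1 -> injective g2 -> (forall a b, g1 a != g2 b) ->
  <<s boxes T m1>> X1 -> <<s boxes T m2>> X2 ->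
  P (subsample g1 @^-1` X1 `&` subsample g2 @^-1` X2) =
  (P (subsample g1 @^-1` X1) * P (subsample g2 @^-1` X2))%E.
Proof.
move=> inj1 inj2 g12 mX1 mX2.
have indep_box2 B2 : (forall j, measurable (B2 j)) -> forall X, <<s boxes T m1>> X ->
    P (subsample g1 @^-1` X `&` subsample g2 @^-1` [set f | forall j, B2 j (f j)])
    = (P (subsample g1 @^-1` X) *
       P (subsample g2 @^-1` [set f | forall j, B2 j (f j)]))%E.
  move=> mB2; apply: indep_subsample_of_boxes.
    by apply: measurable_subsample_preimage; exact: box_sigma_box.
  by move=> B1 mB1; exact: prob_disjoint_boxes.
rewrite setIC muleC; apply: indep_subsample_of_boxes => //.
  exact: measurable_subsample_preimage.
by move=> B2 mB2; rewrite setIC muleC; exact: indep_box2.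
Qed.

Section cpss.
Variables (p B : nat) (S : selection T p).
Arguments S : clear implicits.
Hypothesis hS : forall (m : nat) (k : 'I_p), prod_measurable [set f | k \in S m f].
Variable Apair : 'I_B -> Omega -> {set 'I_n} * {set 'I_n}.
Hypothesis hAmeas : forall j a, measurable [set w | Apair j w = a].
Hypothesis hAsize : forall j w, #|(Apair j w).1| = n./2 /\ #|(Apair j w).2| = n./2.
Hypothesis hAdisj : forall j w, [disjoint (Apair j w).1 & (Apair j w).2]%B.
Hypothesis hAZ : forall (D : set ('I_n -> T))
    (F : set ('I_B -> {set 'I_n} * {set 'I_n})), prod_measurable D ->
  P ([set w | D (fun i : 'I_n => Z i w)] `&` [set w | F (fun j => Apair j w)])
    = (P [set w | D (fun i : 'I_n => Z i w)] *
       P [set w | F (fun j => Apair j w)])%E.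
Variable k : 'I_p.
Hypothesis hB : (0 < B)%N.

Definition selects (b : bool) m : set ('I_m -> T) := [set f | (k \in S m f) = b].
Arguments selects : clear implicits.

Lemma prod_measurable_selects b m : prod_measurable (selects b m).
Proof.
case: b; first exact: hS.
have -> : selects false m = setT `\` [set f | k \in S m f].
  by apply/seteqP; split=> f /=; [move=> -> | move=> [_ /negP/negbTE]].
by apply: sigma_algebraCD; exact: hS.
Qed.

Lemma box_sigma_selects b m : <<s boxes T m>> (selects b m).
Proof. by apply: prod_measurable_box_sigma; exact: prod_measurable_selects. Qed.

Definition selected_on (b : bool) (a : {set 'I_n}) : set Omega :=
  [set w | (k \in S_hat S Z a w) = b].

Lemma selected_onE b (a : {set 'I_n}) :
  selected_on b a = subsample enum_val @^-1` selects b #|a|.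
Proof. by []. Qed.

Lemma measurable_selected_on b (a : {set 'I_n}) : measurable (selected_on b a).
Proof.
by rewrite selected_onE; apply: measurable_subsample_preimage;
  exact: box_sigma_selects.
Qed.

Definition half_prob (b : bool) : \bar R :=
  P [set w | (k \in S n./2 (fun i : 'I_n./2 => Z i w)) = b].

Lemma half_probE b :
  half_prob b = P (subsample (widen_ord (leq_half n)) @^-1` selects b n./2).
Proof. by []. Qed.

Lemma prob_selected_on b (a : {set 'I_n}) :
  #|a| = n./2 -> P (selected_on b a) = half_prob b.
Proof.
move=> ha; have le_an : (#|a| <= n)%N by rewrite ha leq_half.
have winj : injective (widen_ord le_an).
  by move=> x y /(congr1 val) /= /val_inj.
rewrite selected_onE (prob_subsample_eq (@enum_val_inj _ a) winj); last first.
  exact: box_sigma_selects.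
by rewrite half_probE; move: (#|a|) ha le_an winj => m0 -> le_an _;
  rewrite (bool_irrelevance le_an (leq_half n)).
Qed.

Lemma prob_selected_on_disjoint b (a1 a2 : {set 'I_n}) :
  #|a1| = n./2 -> #|a2| = n./2 -> [disjoint a1 & a2]%B ->
  P (selected_on b a1 `&` selected_on b a2) = (half_prob b * half_prob b)%E.
Proof.
move=> ha1 ha2 a12; rewrite -{1}(prob_selected_on b ha1) -(prob_selected_on b ha2).
rewrite !selected_onE subsample_indep //; first exact: enum_val_inj.
- exact: enum_val_inj.
- move=> x y; apply/eqP => xy; have := disjointFr a12 (enum_valP x).
  by rewrite xy enum_valP.
- exact: box_sigma_selects.
- exact: box_sigma_selects.
Qed.

Definition agree_at (b : bool) (a : {set 'I_n} * {set 'I_n}) : set Omega :=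
  selected_on b a.1 `&` selected_on b a.2.

Definition agree (b : bool) (j : 'I_B) : set Omega :=
  [set w | agree_at b (Apair j w) w].

Lemma pair_decomposition j (E : {set 'I_n} * {set 'I_n} -> set Omega) :
  [set w | E (Apair j w) w] =
  \bigcup_(a in [set: {set 'I_n} * {set 'I_n}]) (Apair j @^-1` [set a] `&` E a).
Proof.
apply/seteqP; split=> w /=; first by exists (Apair j w).
by case=> a _ [/= ->].
Qed.

Lemma measurable_pair_dependent j (E : {set 'I_n} * {set 'I_n} -> set Omega) :
  (forall a, measurable (E a)) -> measurable [set w | E (Apair j w) w].
Proof.
move=> mE; rewrite pair_decomposition.
apply: fin_bigcup_measurable; first exact: finite_finset.
by move=> a _; apply: measurableI; [exact: hAmeas | exact: mE].
Qed.

Lemma prob_pair_decomposition j (E : {set 'I_n} * {set 'I_n} -> set Omega) :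
  (forall a, measurable (E a)) ->
  P [set w | E (Apair j w) w] =
  (\sum_(a \in [set: {set 'I_n} * {set 'I_n}]) P (Apair j @^-1` [set a] `&` E a))%E.
Proof.
move=> mE; rewrite pair_decomposition measure_fin_bigcup //.
- exact: finite_finset.
- exact/trivIset_setIr/trivIset_preimage1.
- by move=> a _; apply: measurableI; [exact: hAmeas | exact: mE].
Qed.

(* The pair is independent of the data, and the sets of a possible value
   [a] of the pair are disjoint subsamples of size n/2 (otherwise the event
   [Apair j = a] is empty). *)
Lemma prob_pair_agree b j a :
  P (Apair j @^-1` [set a] `&` agree_at b a) =
  (half_prob b * half_prob b * P (Apair j @^-1` [set a]))%E.
Proof.
have [/and3P[/eqP a1_half /eqP a2_half a12]|a_invalid] :=
  boolP [&& #|a.1| == n./2, #|a.2| == n./2 & [disjoint a.1 & a.2]%B].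
  have reindex (c : {set 'I_n}) := prod_measurable_reindex
    (fun i : 'I_#|c| => enum_val i) (@prod_measurable_selects b #|c|).
  have mD := @measurableI _ (g_sigma_algebraType (@cylinders 'I_n d T)) _ _
    (reindex a.1) (reindex a.2).
  rewrite setIC (hAZ [set G | G j = a] mD); congr (_ * _)%E.
  exact: prob_selected_on_disjoint.
have -> : Apair j @^-1` [set a] = set0.
  apply/seteqP; split=> // w /= ja; apply/negP: a_invalid; rewrite -ja.
  by have [-> ->] := hAsize j w; rewrite !eqxx hAdisj.
by rewrite set0I measure0 mule0.
Qed.

Lemma prob_agree b j : P (agree b j) = (half_prob b * half_prob b)%E.
Proof.
rewrite prob_pair_decomposition; last first.
  by move=> a; apply: measurableI; exact: measurable_selected_on.
under eq_fsbigr do rewrite prob_pair_agree.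
rewrite fsbig_finite //= -ge0_sume_distrr; last by move=> a _; exact: measure_ge0.
have := prob_pair_decomposition j (fun _ => @measurableT _ Omega).
rewrite fsbig_finite //= probability_setT.
under eq_bigr do rewrite setIT.
by move <-; rewrite mule1.
Qed.

Lemma measurable_agree b j : measurable (agree b j).
Proof.
apply: measurable_pair_dependent => a.
by apply: measurableI; exact: measurable_selected_on.
Qed.

Lemma indic_agree b j w :
  \1_(agree b j) w = (((k \in S_hat S Z (Apair j w).1 w) == b) &&
                      ((k \in S_hat S Z (Apair j w).2 w) == b) : nat)%:R :> R.
Proof.
have -> : agree b j = [set v | ((k \in S_hat S Z (Apair j v).1 v) == b) &&
                               ((k \in S_hat S Z (Apair j v).2 v) == b)].
  apply/seteqP; split=> v /=; first by case=> /= -> ->; rewrite !eqxx.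
  by case/andP=> /eqP e1 /eqP e2; split.
by rewrite indic_setE.
Qed.

Lemma agree_count_selected (tau : R) w : k \in S_cpss S Z Apair tau w ->
  (2 * tau - 1) * B%:R <= \sum_(j < B) \1_(agree true j) w.
Proof.
rewrite inE /Pi_hat => selected.
have B_gt0 : 0 < B%:R :> R by rewrite ltr0n.
move: selected; rewrite ler_pdivlMl ?mulr_gt0 // => selected.
have count : \sum_(j < B) ((k \in S_hat S Z (Apair j w).1 w : nat)%:R +
                            (k \in S_hat S Z (Apair j w).2 w : nat)%:R) <=
             \sum_(j < B) (1 + \1_(agree true j) w) :> R.
  by apply: ler_sum => j _; rewrite indic_agree !eqb_id; exact: bits_add_le.
have sumB : \sum_(j < B) (1 : R) = B%:R by rewrite sumr_const card_ord.
rewrite [X in _ <= X]big_split /= sumB in count; lra.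
Qed.

Lemma agree_count_unselected (tau : R) w : k \notin S_cpss S Z Apair tau w ->
  (1 - 2 * tau) * B%:R <= \sum_(j < B) \1_(agree false j) w.
Proof.
rewrite inE -ltNge /Pi_hat => unselected.
have B_gt0 : 0 < B%:R :> R by rewrite ltr0n.
move: unselected; rewrite ltr_pdivrMl ?mulr_gt0 // => unselected.
have count : \sum_(j < B) (1 : R) <=
             \sum_(j < B) ((k \in S_hat S Z (Apair j w).1 w : nat)%:R +
                           (k \in S_hat S Z (Apair j w).2 w : nat)%:R +
                           \1_(agree false j) w).
  by apply: ler_sum => j _; rewrite indic_agree !eqbF_neg; exact: bits_add_ge.
have sumB : \sum_(j < B) (1 : R) = B%:R by rewrite sumr_const card_ord.
rewrite [X in _ <= X]big_split /= sumB in count; lra.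
Qed.

Lemma measurable_cpss (tau : R) : measurable [set w | k \in S_cpss S Z Apair tau w].
Proof.
pose selected_in (h : {set 'I_n} * {set 'I_n} -> {set 'I_n}) (j : 'I_B) :=
  [set w | k \in S_hat S Z (h (Apair j w)) w].
have msel h j : measurable (selected_in h j).
  exact: (measurable_pair_dependent j (fun a => measurable_selected_on true (h a))).
have -> : [set w | k \in S_cpss S Z Apair tau w] =
    Pi_hat R S Z Apair k @^-1` `[tau, +oo[.
  apply/seteqP; split=> w /=; first by rewrite inE in_itv /= andbT.
  by rewrite in_itv /= andbT inE.
pose indicator_sum w : R :=
  (2 * B%:R)^-1 * \sum_(j < B) (\1_(selected_in fst j) w + \1_(selected_in snd j) w).
have -> : Pi_hat R S Z Apair k = indicator_sum.
  by apply/funext => w; congr (_ * _); apply: eq_bigr => j _; rewrite !indic_setE.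
have mPi : measurable_fun setT indicator_sum.
  apply: measurable_funM; first exact: measurable_cst.
  by apply: measurable_sum => j; apply: measurable_funD; exact: measurable_indic.
by have := mPi measurableT _ (measurable_itv `[tau, +oo[); rewrite setTI.
Qed.

Lemma measurable_half_selected :
  measurable [set w | k \in S n./2 (fun i : 'I_n./2 => Z i w)].
Proof.
have := measurable_subsample_preimage (widen_ord (leq_half n))
  (@box_sigma_selects true n./2).
exact.
Qed.

Lemma half_prob_true : half_prob true = (p_km P S Z k n./2)%:E.
Proof. by rewrite /p_km fineK // (fin_num_measure _ _ measurable_half_selected). Qed.

Lemma half_prob_false : half_prob false = (1 - p_km P S Z k n./2)%:E.
Proof.
have -> : half_prob false = P (~` [set w | k \in S n./2 (fun i : 'I_n./2 => Z i w)]).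
  congr (P _); apply/seteqP; split=> w /=; first by move=> ->.
  by move/negP/negbTE.
rewrite (probability_setC _ measurable_half_selected).
by rewrite -[P _]/(half_prob true) half_prob_true -EFinB.
Qed.

Lemma cpss_markov b r c (C : set Omega) :
  half_prob b = r%:E -> measurable C -> 0 < c ->
  (forall w, C w -> c * B%:R <= \sum_(j < B) \1_(agree b j) w) ->
  (P C <= (c^-1 * r ^+ 2)%:E)%E.
Proof.
move=> half_r mC c_gt0 count.
have B_gt0 : 0 < B%:R :> R by rewrite ltr0n.
have markov : ((c * B%:R)%:E * P C <= \sum_(j < B) P (agree b j))%E.
  exact: (markov_count P (measurable_agree b) mC (ltW (mulr_gt0 c_gt0 B_gt0)) count).
have sum_agree : (\sum_(j < B) P (agree b j) = (B%:R * r ^+ 2)%:E)%E.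
  rewrite (eq_bigr (fun=> (r ^+ 2)%:E)) => [|j _]; last first.
    by rewrite prob_agree half_r -EFinM expr2.
  by rewrite sumEFin sumr_const card_ord mulr_natl.
move: markov; rewrite sum_agree -(fineK (fin_num_measure P _ mC)) -EFinM !lee_fin.
move=> markov; rewrite ler_pdivlMl // -(ler_pM2r B_gt0); lra.
Qed.

Lemma cpss_selected_bound (tau : R) : 1/2 < tau <= 1 ->
  (P [set w | k \in S_cpss S Z Apair tau w]
     <= ((2 * tau - 1)^-1 * (p_km P S Z k n./2) ^+ 2)%:E)%E.
Proof.
case/andP=> tau_gt _; apply: cpss_markov half_prob_true (measurable_cpss tau) _ _.
  by lra.
by move=> w; exact: agree_count_selected.
Qed.

Lemma cpss_unselected_bound (tau : R) : 0 <= tau < 1/2 ->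
  (P [set w | k \notin S_cpss S Z Apair tau w]
     <= ((1 - 2 * tau)^-1 * (1 - p_km P S Z k n./2) ^+ 2)%:E)%E.
Proof.
case/andP=> _ tau_lt; apply: cpss_markov half_prob_false _ _ _.
- have -> : [set w | k \notin S_cpss S Z Apair tau w] =
            ~` [set w | k \in S_cpss S Z Apair tau w].
    by apply/seteqP; split=> w /= /negP.
  exact/measurableC/measurable_cpss.
- by lra.
- by move=> w; exact: agree_count_unselected.
Qed.

End cpss.
End iid_subsamples.

Theorem lemma1 (R : realType)
  (d0 : measure_display) (Omega : measurableType d0) (P : probability Omega R)
  (d : measure_display) (T : measurableType d)
  (n p B : nat) (hn : (2 <= n)%N) (hp : (1 <= p)%N) (hB : (1 <= B)%N)
  (S : selection T p)
  (hS : forall (m : nat) (k : 'I_p), prod_measurable [set f | k \in S m f])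
  (Z : nat -> Omega -> T)
  (hZmeas : forall i : 'I_n, measurable_fun setT (Z i))
  (hZind : forall Bs : 'I_n -> set T, (forall i, measurable (Bs i)) ->
     P (\bigcap_(i in [set: 'I_n]) (Z i @^-1` Bs i))
       = (\prod_(i < n) P (Z i @^-1` Bs i))%E)
  (hZid : forall (i j : 'I_n) (Bs : set T), measurable Bs ->
     P (Z i @^-1` Bs) = P (Z j @^-1` Bs))
  (Apair : 'I_B -> Omega -> {set 'I_n} * {set 'I_n})
  (hAmeas : forall j a, measurable [set w | Apair j w = a])
  (hAsize : forall j w, #|(Apair j w).1| = n./2 /\ #|(Apair j w).2| = n./2)
  (hAdisj : forall j w, fintype.disjoint (mem (Apair j w).1) (mem (Apair j w).2))
  (hAind : forall F : 'I_B -> set ({set 'I_n} * {set 'I_n}),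
     P (\bigcap_(j in [set: 'I_B]) (Apair j @^-1` F j))
       = (\prod_(j < B) P (Apair j @^-1` F j))%E)
  (hAZ : forall (D : set ('I_n -> T)) (F : set ('I_B -> {set 'I_n} * {set 'I_n})),
     prod_measurable D ->
     P ([set w | D (fun i : 'I_n => Z i w)] `&` [set w | F (fun j => Apair j w)])
       = (P [set w | D (fun i : 'I_n => Z i w)]
          * P [set w | F (fun j => Apair j w)])%E)
  (k : 'I_p) :
  (forall tau : R, 1/2 < tau <= 1 ->
     (P [set w | k \in S_cpss S Z Apair tau w]
       <= ((2 * tau - 1)^-1 * (p_km P S Z k n./2) ^+ 2)%:E)%E) /\
  (forall tau : R, 0 <= tau < 1/2 ->
     (P [set w | k \notin S_cpss S Z Apair tau w]
       <= ((1 - 2 * tau)^-1 * (1 - p_km P S Z k n./2) ^+ 2)%:E)%E).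
Proof.
split.
- exact: (cpss_selected_bound hZmeas hZind hZid hS hAmeas hAsize hAdisj hAZ k hB).
- exact: (cpss_unselected_bound hZmeas hZind hZid hS hAmeas hAsize hAdisj hAZ k hB).
Qed.
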